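(* For every $k\ge1$ there is a constant $c_k$ such that for every $n\ge1$ and every sentence $\varphi\in\mathrm{FO}^2_n[<]$ over a $k$-letter alphabet $\Sigma$: if $\varphi$ is satisfied by some word in $\Sigma^\star$, then $\varphi$ is satisfied by some word in $\Sigma^\star$ of length at most $c_k n^k$.
   Context: Words are finite structures with universe $\{1,\dots,|w|\}$, unary predicates $Q_a$ ($a\in\Sigma$) marking the positions carrying letter $a$, and the order $<$. $\mathrm{FO}^2_n[<]$ is first-order logic over this signature using only the two variables $x,y$ (which may be requantified), with quantifier depth at most $n$. *)

From mathcomp Require Import all_boot.
Set Implicit Arguments. Unset Strict Implicit. Unset Printing Implicit Defensive.

Inductive var := VX | VY.

Definition var_eqb (u v : var) : bool :=
  match u, v with VX, VX | VY, VY => true | _, _ => false end.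

Inductive fo2 (k : nat) : Type :=
| FTrue : fo2 k
| FLetter : 'I_k -> var -> fo2 k
| FLt : var -> var -> fo2 k
| FEq : var -> var -> fo2 k
| FNot : fo2 k -> fo2 k
| FAnd : fo2 k -> fo2 k -> fo2 k
| FOr : fo2 k -> fo2 k -> fo2 k
| FEx : var -> fo2 k -> fo2 k
| FAll : var -> fo2 k -> fo2 k.

Fixpoint qdepth k (f : fo2 k) : nat :=
  match f with
  | FTrue | FLetter _ _ | FLt _ _ | FEq _ _ => 0
  | FNot g => qdepth g
  | FAnd g h | FOr g h => maxn (qdepth g) (qdepth h)
  | FEx _ g | FAll _ g => (qdepth g).+1
  end.

Fixpoint free k (v : var) (f : fo2 k) : bool :=
  match f with
  | FTrue => false
  | FLetter _ u => var_eqb u v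
  | FLt u u' | FEq u u' => var_eqb u v || var_eqb u' v
  | FNot g => free v g
  | FAnd g h | FOr g h => free v g || free v h
  | FEx u g | FAll u g => ~~ var_eqb u v && free v g
  end.

Definition sentence k (f : fo2 k) : Prop := ~~ free VX f /\ ~~ free VY f.

Definition upd (s : var -> nat) (v : var) (i : nat) : var -> nat :=
  fun u => if var_eqb u v then i else s u.

(* Semantics on a word w; positions are 0, ..., size w - 1 (order-isomorphic
   to 1, ..., |w|); the letter at position i is nth i w. *)
Fixpoint holds k (w : seq 'I_k) (s : var -> nat) (f : fo2 k) : Prop :=
  match f with
  | FTrue => True
  | FLetter a v => nth None (map Some w) (s v) = Some a
  | FLt u v => s u < s v
  | FEq u v => s u = s v
  | FNot g => ~ holds w s g
  | FAnd g h => holds w s g /\ holds w s h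
  | FOr g h => holds w s g \/ holds w s h
  | FEx v g => exists i, i < size w /\ holds w (upd s v i) g
  | FAll v g => forall i, i < size w -> holds w (upd s v i) g
  end.

(* A word satisfies a sentence (the initial assignment is irrelevant for
   sentences, since every variable occurrence is bound). *)
Definition models k (w : seq 'I_k) (f : fo2 k) : Prop := holds w (fun _ => 0) f.

From mathcomp Require Import all_boot zify.
Set Implicit Arguments. Unset Strict Implicit. Unset Printing Implicit Defensive.

(* By the Ehrenfeucht-Fraisse game for two pebbles, FO^2_n cannot distinguish
   words on which Duplicator wins n rounds, so it suffices to shrink every word
   w to an n-round equivalent one.  Cut w greedily into blocks, each of which
   contains every letter of w and is minimal with this property, followed by a
   remainder containing fewer letters.  If there are more than 2n blocks, the
   part between the first n and the last n blocks can be deleted: Duplicator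
   answers a move far from the deleted part by the corresponding position, and
   a move near it by a position in a block at roughly the same distance; since
   every block contains every letter, such a position exists, and each round
   consumes one unit of distance.  Shrinking each block (minus its last letter)
   and the remainder by induction on the number of letters gives words of
   length at most c_k n^k. *)

Lemma var_eqb_refl u : var_eqb u u. Proof. by case: u. Qed.

Lemma var_eqb_sym u v : var_eqb u v = var_eqb v u. Proof. by case: u; case: v. Qed.

Definition other v := match v with VX => VY | VY => VX end.

Lemma var_cases u v : u = v \/ u = other v.
Proof. by case: u; case: v; auto. Qed.

Lemma upd_same s v i : upd s v i v = i.
Proof. by rewrite /upd var_eqb_refl. Qed.

Lemma upd_other s v i : upd s v i (other v) = s (other v).
Proof. by case: v. Qed.

Definition extend (P : var -> bool) v : var -> bool := fun u => var_eqb u v || P u.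

Lemma extend_other P v : extend P v (other v) = P (other v).
Proof. by case: v. Qed.

Definition same_order (a b a' b' : nat) : bool :=
  ((a < b) == (a' < b')) && ((a == b) == (a' == b')).

Lemma same_order_diag a a' : same_order a a a' a'.
Proof. by rewrite /same_order !ltnn !eqxx. Qed.

Lemma same_order_refl a b : same_order a b a b.
Proof. by rewrite /same_order !eqxx. Qed.

Lemma same_order_sym a b a' b' : same_order a b a' b' -> same_order b a b' a'.
Proof.
rewrite /same_order => /andP[/eqP H1 /eqP H2]; apply/andP; split; apply/eqP.
- by case: (ltngtP a b) H1 H2; case: (ltngtP a' b').
- by rewrite eq_sym H2 eq_sym.
Qed.

Lemma same_order_trans a b a' b' a'' b'' :
  same_order a b a' b' -> same_order a' b' a'' b'' -> same_order a b a'' b''.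
Proof. by rewrite /same_order => /andP[/eqP -> /eqP ->]. Qed.

Lemma same_order_lt a b a' b' : a < b -> a' < b' -> same_order a b a' b'.
Proof. by move=> H H'; rewrite /same_order H H' (ltn_eqF H) (ltn_eqF H'). Qed.

Lemma same_order_addr a b a' b' d d' :
  same_order (a + d) (b + d) (a' + d') (b' + d') = same_order a b a' b'.
Proof. by rewrite /same_order !ltn_add2r !eqn_add2r. Qed.

Section EFGame.
Variable k : nat.
Implicit Types (w u : seq 'I_k) (s sL sR : var -> nat) (P PL PR : var -> bool).

Definition letter w p := nth None (map Some w) p.

Lemma letter_cat u v p :
  letter (u ++ v) p = if p < size u then letter u p else letter v (p - size u).
Proof. by rewrite /letter map_cat nth_cat size_map. Qed.

Lemma letter_catr u v p : letter (u ++ v) (size u + p) = letter v p.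
Proof. by rewrite letter_cat ltnNge leq_addr addKn. Qed.

Lemma letter_some w p : p < size w -> exists2 a, a \in w & letter w p = Some a.
Proof.
case: w => [//|a0 w] Hp; exists (nth a0 (a0 :: w) p); first exact: mem_nth.
by rewrite /letter (nth_map a0).
Qed.

Definition partial_iso w w' s s' P : Prop :=
  (forall x, P x -> [/\ s x < size w, s' x < size w' & letter w (s x) = letter w' (s' x)]) /\
  (forall x y, P x -> P y -> same_order (s x) (s y) (s' x) (s' y)).

(* [ef_equiv r w w' s s' P]: Duplicator wins the [r]-round two-pebble
   Ehrenfeucht-Fraisse game on [w] and [w'] from the position where each
   variable [x] with [P x] pebbles [s x] in [w] and [s' x] in [w']. *)
Fixpoint ef_equiv r w w' s s' P : Prop :=
  partial_iso w w' s s' P /\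
  if r is r'.+1 then forall v,
    (forall i, i < size w -> exists2 i', i' < size w' &
       ef_equiv r' w w' (upd s v i) (upd s' v i') (extend P v)) /\
    (forall i', i' < size w' -> exists2 i, i < size w &
       ef_equiv r' w w' (upd s v i) (upd s' v i') (extend P v))
  else True.

Definition ef_equiv0 r w w' := ef_equiv r w w' (fun=> 0) (fun=> 0) xpred0.

Lemma ef_equiv_partial_iso r w w' s s' P :
  ef_equiv r w w' s s' P -> partial_iso w w' s s' P.
Proof. by case: r => [[]|r []]. Qed.

Lemma ef_equiv_holds (f : fo2 k) r w w' s s' P :
  qdepth f <= r -> (forall x, free x f -> P x) -> ef_equiv r w w' s s' P ->
  holds w s f <-> holds w' s' f.
Proof.
elim: f r s s' P => [|a x|x y|x y|g IH|g IHg h IHh|g IHg h IHh|x g IH|x g IH]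
  r s s' P /= Hd Hf Hg; have [Hpt Hord] := ef_equiv_partial_iso Hg.
- by [].
- by have [_ _ E] := Hpt x (Hf x (var_eqb_refl x)); rewrite /letter in E; rewrite E.
- have Hx : P x by apply: Hf; rewrite /= var_eqb_refl.
  have Hy : P y by apply: Hf; rewrite /= var_eqb_refl orbT.
  by have /andP[/eqP -> _] := Hord x y Hx Hy.
- have Hx : P x by apply: Hf; rewrite /= var_eqb_refl.
  have Hy : P y by apply: Hf; rewrite /= var_eqb_refl orbT.
  have /andP[_ /eqP E] := Hord x y Hx Hy.
  by split=> /eqP H; apply/eqP; rewrite ?E // -E.
- by rewrite (IH r s s' P).
- move: Hd; rewrite geq_max => /andP[H1 H2].
  by rewrite (IHg r s s' P) ?(IHh r s s' P) // => y Hy; apply: Hf; rewrite Hy ?orbT.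
- move: Hd; rewrite geq_max => /andP[H1 H2].
  by rewrite (IHg r s s' P) ?(IHh r s s' P) // => y Hy; apply: Hf; rewrite Hy ?orbT.
- case: r Hd Hg => // r Hd [_ /(_ x) [Hforth Hback]].
  have Hf' y : free y g -> extend P x y.
    by rewrite /extend; case E: (var_eqb y x) => //= Hy; apply: Hf; rewrite Hy var_eqb_sym E.
  split=> [[i [Hi Hh]]|[i' [Hi' Hh]]].
  + have [i' Hi' G] := Hforth i Hi.
    by exists i'; split=> //; rewrite -(IH r _ _ _ Hd Hf' G).
  + have [i Hi G] := Hback i' Hi'.
    by exists i; split=> //; rewrite (IH r _ _ _ Hd Hf' G).
- case: r Hd Hg => // r Hd [_ /(_ x) [Hforth Hback]].
  have Hf' y : free y g -> extend P x y.
    by rewrite /extend; case E: (var_eqb y x) => //= Hy; apply: Hf; rewrite Hy var_eqb_sym E.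
  split=> H.
  + by move=> i' Hi'; have [i Hi G] := Hback i' Hi'; rewrite -(IH r _ _ _ Hd Hf' G); apply: H.
  + by move=> i Hi; have [i' Hi' G] := Hforth i Hi; rewrite (IH r _ _ _ Hd Hf' G); apply: H.
Qed.

Lemma partial_iso_sub w w' s s' P (Q : var -> bool) :
  (forall x, Q x -> P x) -> partial_iso w w' s s' P -> partial_iso w w' s s' Q.
Proof. by move=> HQ [Hpt Hord]; split=> [x /HQ /Hpt //|x y /HQ Hx /HQ Hy]; exact: Hord. Qed.

Lemma ef_equiv_sub r w w' s s' P (Q : var -> bool) :
  (forall x, Q x -> P x) -> ef_equiv r w w' s s' P -> ef_equiv r w w' s s' Q.
Proof.
elim: r s s' P Q => [|r IH] s s' P Q HQ [Hiso H];
  (split; first exact: partial_iso_sub Hiso) => //.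
have HQ' v x : extend Q v x -> extend P v x.
  by rewrite /extend => /orP[->|/HQ ->]; rewrite ?orbT.
move=> v; have [Hforth Hback] := H v; split.
- by move=> i /Hforth [i' Hi' G]; exists i' => //; exact: IH (HQ' v) G.
- by move=> i' /Hback [i Hi G]; exists i => //; exact: IH (HQ' v) G.
Qed.

Lemma ef_equivS r w w' s s' P : ef_equiv r.+1 w w' s s' P -> ef_equiv r w w' s s' P.
Proof.
elim: r s s' P => [|r IH] s s' P [Hiso H]; first by [].
split=> // v; have [Hforth Hback] := H v; split.
- by move=> i /Hforth [i' Hi' G]; exists i' => //; apply: IH.
- by move=> i' /Hback [i Hi G]; exists i => //; apply: IH.
Qed.

Lemma ef_equiv_refl r w s P : (forall x, P x -> s x < size w) -> ef_equiv r w w s s P.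
Proof.
elim: r s P => [|r IH] s P HP.
  by split=> //; split=> [x /HP|x y _ _]; [|exact: same_order_refl].
split; first by split=> [x /HP|x y _ _]; [|exact: same_order_refl].
have HP' v i x : i < size w -> extend P v x -> upd s v i x < size w.
  by rewrite /extend /upd; case: (var_eqb x v) => //= _ /HP.
by move=> v; split=> i Hi; exists i => //; apply: IH => x; apply: HP'.
Qed.

Lemma ef_equiv_trans r w1 w2 w3 s1 s2 s3 P :
  ef_equiv r w1 w2 s1 s2 P -> ef_equiv r w2 w3 s2 s3 P -> ef_equiv r w1 w3 s1 s3 P.
Proof.
elim: r s1 s2 s3 P => [|r IH] s1 s2 s3 P [[A1 A2] H] [[B1 B2] H'];
  (have Hiso : partial_iso w1 w3 s1 s3 P by
    split=> [x Hx|x y Hx Hy]; [have [? ? ->] := A1 x Hx; have [? ? ->] := B1 x Hx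
                             | exact: same_order_trans (A2 _ _ Hx Hy) (B2 _ _ Hx Hy)]);
  split=> // v.
have [Hforth Hback] := H v; have [Hforth' Hback'] := H' v; split.
- move=> i /Hforth [i2 Hi2 G1]; have [i3 Hi3 G2] := Hforth' i2 Hi2.
  by exists i3 => //; apply: IH G1 G2.
- move=> i3 /Hback' [i2 Hi2 G2]; have [i Hi G1] := Hback i2 Hi2.
  by exists i => //; apply: IH G1 G2.
Qed.

(* Every pebble pair on [u ++ v], [u' ++ v'] lies in the two left factors or
   in the two right factors, where it is a pebble pair of the game on [u], [u']
   or of the game on [v], [v'] (shifted by the sizes of [u] and [u']). *)
Definition cat_split u u' sL (sL' : var -> nat) PL sR (sR' : var -> nat) PR s s' P :=
  forall x, P x ->
   [/\ s x < size u, s' x < size u', PL x, sL x = s x & sL' x = s' x] \/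
   [/\ size u <= s x, size u' <= s' x, PR x, sR x + size u = s x & sR' x + size u' = s' x].

Lemma cat_split_updl u u' sL sL' PL sR sR' PR s s' P v i i' :
  cat_split u u' sL sL' PL sR sR' PR s s' P -> i < size u -> i' < size u' ->
  cat_split u u' (upd sL v i) (upd sL' v i') (extend PL v) sR sR' (fun x => PR x && ~~ var_eqb x v)
     (upd s v i) (upd s' v i') (extend P v).
Proof.
move=> Hs Hi Hi' x; rewrite /extend /upd; case: (var_eqb x v) => /= Hx; first by left.
by case: (Hs x Hx) => -[? ? -> -> ->]; [left|right].
Qed.

Lemma cat_split_updr u u' sL sL' PL sR sR' PR s s' P v i i' :
  cat_split u u' sL sL' PL sR sR' PR s s' P -> size u <= i -> size u' <= i' ->
  cat_split u u' sL sL' (fun x => PL x && ~~ var_eqb x v)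
     (upd sR v (i - size u)) (upd sR' v (i' - size u')) (extend PR v)
     (upd s v i) (upd s' v i') (extend P v).
Proof.
move=> Hs Hi Hi' x; rewrite /extend /upd; case: (var_eqb x v) => /= Hx.
  by right; rewrite !subnK.
by case: (Hs x Hx) => -[? ? -> -> ->]; [left|right].
Qed.

Lemma partial_iso_cat u u' v v' sL sL' PL sR sR' PR s s' P :
  partial_iso u u' sL sL' PL -> partial_iso v v' sR sR' PR ->
  cat_split u u' sL sL' PL sR sR' PR s s' P -> partial_iso (u ++ v) (u' ++ v') s s' P.
Proof.
move=> [A1 A2] [B1 B2] Hs; split.
- move=> x /Hs [[H1 H2 H3 H4 H5]|[H1 H2 H3 H4 H5]].
  + have [C1 C2 C3] := A1 x H3.
    by rewrite !size_cat !letter_cat H1 H2 -H4 -H5 C3; split=> //; lia.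
  + have [C1 C2 C3] := B1 x H3.
    rewrite !size_cat !letter_cat -H4 -H5 !ltnNge !leq_addl /= !addnK C3.
    by split=> //; lia.
- move=> x y /Hs [[H1 H2 H3 H4 H5]|[H1 H2 H3 H4 H5]]
             /Hs [[G1 G2 G3 G4 G5]|[G1 G2 G3 G4 G5]].
  + by rewrite -H4 -H5 -G4 -G5; apply: A2.
  + by apply: same_order_lt; lia.
  + by apply: same_order_sym; apply: same_order_lt; lia.
  + by rewrite -H4 -H5 -G4 -G5 same_order_addr; apply: B2.
Qed.

Lemma ef_equiv_cat_split r u u' v v' sL sL' PL sR sR' PR s s' P :
  ef_equiv r u u' sL sL' PL -> ef_equiv r v v' sR sR' PR ->
  cat_split u u' sL sL' PL sR sR' PR s s' P ->
  ef_equiv r (u ++ v) (u' ++ v') s s' P.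
Proof.
elim: r sL sL' PL sR sR' PR s s' P => [|r IH] sL sL' PL sR sR' PR s s' P GL GR Hs;
  split; try exact: partial_iso_cat (ef_equiv_partial_iso GL) (ef_equiv_partial_iso GR) Hs.
  by [].
move=> x; have [_ /(_ x) [GLf GLb]] := GL; have [_ /(_ x) [GRf GRb]] := GR.
have drop_x (Q : var -> bool) y : Q y && ~~ var_eqb y x -> Q y by case/andP.
have GL' := ef_equiv_sub (drop_x PL) (ef_equivS GL).
have GR' := ef_equiv_sub (drop_x PR) (ef_equivS GR).
split=> [i|i']; rewrite size_cat => Hi.
- case: (ltnP i (size u)) => Hu.
  + have [i1 Hi1 G1] := GLf i Hu.
    exists i1; first by rewrite size_cat ltn_addr.
    exact: IH G1 GR' (cat_split_updl Hs Hu Hi1).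
  + have [i1 Hi1 G1] := GRf (i - size u) ltac:(lia).
    exists (i1 + size u'); first by rewrite size_cat; lia.
    have := cat_split_updr (v := x) (i' := i1 + size u') Hs Hu (leq_addl _ _).
    by rewrite addnK => Hs'; exact: IH GL' G1 Hs'.
- case: (ltnP i' (size u')) => Hu.
  + have [i1 Hi1 G1] := GLb i' Hu.
    exists i1; first by rewrite size_cat ltn_addr.
    exact: IH G1 GR' (cat_split_updl Hs Hi1 Hu).
  + have [i1 Hi1 G1] := GRb (i' - size u') ltac:(lia).
    exists (i1 + size u); first by rewrite size_cat; lia.
    have := cat_split_updr (v := x) (i := i1 + size u) Hs (leq_addl _ _) Hu.
    by rewrite addnK => Hs'; exact: IH GL' G1 Hs'.
Qed.

Lemma ef_equiv0_refl r w : ef_equiv0 r w w.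
Proof. exact: ef_equiv_refl. Qed.

Lemma ef_equiv0_trans r w1 w2 w3 : ef_equiv0 r w1 w2 -> ef_equiv0 r w2 w3 -> ef_equiv0 r w1 w3.
Proof. exact: ef_equiv_trans. Qed.

Lemma ef_equiv0_cat r u u' v v' :
  ef_equiv0 r u u' -> ef_equiv0 r v v' -> ef_equiv0 r (u ++ v) (u' ++ v').
Proof. by move=> G1 G2; apply: ef_equiv_cat_split G1 G2 _. Qed.

End EFGame.

Lemma homo_leq_lt (f : nat -> nat) p q :
  {homo f : m n / m <= n} -> f p < f q -> p < q.
Proof. by move=> f_homo; apply: contraLR; rewrite -!leqNgt; apply: f_homo. Qed.

Definition distn a b := (a - b) + (b - a).

(* [W'] arises from [W] by deleting the positions of level [c]; [phi] maps the
   remaining positions of [W] to [W'], and [psi] is its inverse. *)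
Section LevelledDeletion.
Variables (k n c : nat) (W W' : seq 'I_k) (lv lv' phi psi : nat -> nat).
Hypothesis n_le_c : n <= c.
Hypothesis lv_homo : {homo lv : p q / p <= q}.
Hypothesis lv'_homo : {homo lv' : p q / p <= q}.
Hypothesis phi_spec : forall p, p < size W -> lv p != c ->
  [/\ phi p < size W', lv' (phi p) = lv p & letter W' (phi p) = letter W p].
Hypothesis phi_mono : forall p q, p < q -> q < size W -> lv p != c -> lv q != c ->
  phi p < phi q.
Hypothesis psi_spec : forall p', p' < size W' ->
  [/\ psi p' < size W, lv (psi p') != c & phi (psi p') = p'].

Definition rich V (lvV : nat -> nat) :=
  forall t p : nat, t != c -> distn t c <= n -> p < size W ->
    exists q, [/\ q < size V, lvV q = t & letter V q = letter W p].

Hypothesis W_rich : rich W lv.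
Hypothesis W'_rich : rich W' lv'.

(* The invariant of Duplicator's strategy with [r] rounds played: each pebble
   pair is matched by [phi], or both of its pebbles are within distance [n - r]
   of level [c], where all letters are still available on both sides. *)
Definition status r p p' :=
  ((lv p != c) && (p' == phi p)) ||
  ((distn (lv p) c <= n - r) && (distn (lv' p') c <= n - r)).

Definition strategy_inv r s s' P :=
  partial_iso W W' s s' P /\ forall x, P x -> status r (s x) (s' x).

Lemma statusS r p p' : status r.+1 p p' -> status r p p'.
Proof. by rewrite /status => /orP[->//|/andP[H1 H2]]; apply/orP; right; apply/andP; lia. Qed.

Lemma phi_same_order p q : p < size W -> q < size W -> lv p != c -> lv q != c ->
  same_order p q (phi p) (phi q).
Proof.
move=> Hp Hq Hcp Hcq; case: (ltngtP p q) => [H|H|->]; last exact: same_order_diag.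
- by apply: same_order_lt => //; apply: phi_mono.
- by apply: same_order_sym; apply: same_order_lt => //; apply: phi_mono.
Qed.

Lemma strategy_inv_upd r s s' P v i i' :
  strategy_inv r.+1 s s' P -> i < size W -> i' < size W' -> letter W i = letter W' i' ->
  (P (other v) -> same_order i (s (other v)) i' (s' (other v))) -> status r i i' ->
  strategy_inv r (upd s v i) (upd s' v i') (extend P v).
Proof.
move=> [[A1 A2] St] Hi Hi' Hl Ho Hs; split; first split.
- move=> x; case: (var_cases x v) => ->; first by rewrite !upd_same.
  by rewrite extend_other !upd_other => /A1.
- move=> x y; case: (var_cases x v) => ->; case: (var_cases y v) => ->;
    rewrite ?extend_other ?upd_same ?upd_other.
  + by move=> _ _; exact: same_order_diag.
  + by move=> _ /Ho.
  + by move=> /Ho H _; apply: same_order_sym.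
  + exact: A2.
- move=> x; case: (var_cases x v) => ->; first by rewrite !upd_same.
  by rewrite extend_other !upd_other => /St /statusS.
Qed.

Lemma pick_below V lvV r j p : rich V lvV -> r < n -> c - (n - r.+1) <= j -> p < size W ->
  exists q, [/\ q < size V, lvV q < j, letter V q = letter W p & distn (lvV q) c <= n - r].
Proof.
move=> HV Hr Hj Hp.
have [q [Hq Hlq Hlet]] := HV (minn j c).-1 p ltac:(lia) ltac:(rewrite /distn; lia) Hp.
by exists q; rewrite Hlq /distn; split=> //; lia.
Qed.

Lemma pick_above V lvV r j p : rich V lvV -> r < n -> j <= c + (n - r.+1) -> p < size W ->
  exists q, [/\ q < size V, j < lvV q, letter V q = letter W p & distn (lvV q) c <= n - r].
Proof.
move=> HV Hr Hj Hp.
have [q [Hq Hlq Hlet]] := HV (maxn j c).+1 p ltac:(lia) ltac:(rewrite /distn; lia) Hp.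
by exists q; rewrite Hlq /distn; split=> //; lia.
Qed.

Lemma far_same_order r p p' a a' :
  distn (lv a) c <= n - r.+1 -> distn (lv' a') c <= n - r.+1 ->
  lv p = lv' p' -> n - r < distn (lv p) c -> same_order p a p' a'.
Proof.
rewrite /distn => Da Da' Hpp' Hfar.
have [Hhi|Hlo] : c + (n - r) < lv p \/ lv p + (n - r) < c by lia.
- apply: same_order_sym; apply: same_order_lt.
  + by apply: homo_leq_lt lv_homo _; lia.
  + by apply: homo_leq_lt lv'_homo _; lia.
- apply: same_order_lt.
  + by apply: homo_leq_lt lv_homo _; lia.
  + by apply: homo_leq_lt lv'_homo _; lia.
Qed.

Lemma forth_level_near r s s' P v i : strategy_inv r.+1 s s' P -> i < size W ->
  ~~ ((lv i != c) && (P (other v) ==> same_order i (s (other v)) (phi i) (s' (other v)))) ->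
  distn (lv i) c <= n - r.
Proof.
move=> [[A1 _] St] Hi; have [->|Hc] := eqVneq (lv i) c; first by rewrite /distn subnn.
case Po: (P (other v)) => //=; apply: contraR; rewrite -ltnNge => Hfar.
have [Ha _ _] := A1 _ Po; have [_ Hl _] := phi_spec Hi Hc.
move: (St _ Po) => /orP[/andP[Hca /eqP ->]|/andP[Da Da']].
- exact: phi_same_order.
- exact: far_same_order Da Da' (esym Hl) Hfar.
Qed.

Lemma partner_level_bounds r a a' i : a < size W -> i < size W -> status r.+1 a a' ->
  ~~ ((lv i != c) && same_order i a (phi i) a') ->
  (i < a -> c - (n - r.+1) <= lv' a') /\ (a < i -> lv' a' <= c + (n - r.+1)).
Proof.
move=> Ha Hi /orP[/andP[Hca /eqP Ea]|/andP[Da Da']] Hno; last first.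
  by rewrite /distn in Da'; split=> _; lia.
have Hic : lv i = c.
  by apply/eqP; apply: contraNT Hno => Hc; rewrite Hc Ea; exact: phi_same_order.
have [_ Hla _] := phi_spec Ha Hca; rewrite Ea Hla.
by split=> /ltnW /lv_homo; lia.
Qed.

Lemma forth r s s' P v i : r < n -> strategy_inv r.+1 s s' P -> i < size W ->
  exists2 i', i' < size W' & strategy_inv r (upd s v i) (upd s' v i') (extend P v).
Proof.
move=> Hr HI Hi; have [[A1 _] St] := HI.
have [/andP[Hc Ho]|Hno] :=
  boolP ((lv i != c) && (P (other v) ==> same_order i (s (other v)) (phi i) (s' (other v)))).
  have [Hpi _ Hlet] := phi_spec Hi Hc.
  exists (phi i) => //; apply: (strategy_inv_upd HI Hi Hpi) => [||]; first by rewrite Hlet.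
  - exact/implyP.
  - by rewrite /status Hc eqxx.
have Hd := forth_level_near HI Hi Hno.
case Po: (P (other v)); last first.
  have [q [Hq _ Hlet Hdq]] := pick_below W'_rich Hr (leq_subr _ c) Hi.
  exists q => //; apply: (strategy_inv_upd HI Hi Hq) => [||]; first by rewrite Hlet.
  - by rewrite Po.
  - by rewrite /status Hd Hdq orbT.
have [Ha Ha' Hla] := A1 _ Po; rewrite Po /= in Hno.
have [below above] := partner_level_bounds Ha Hi (St _ Po) Hno.
case: (ltngtP i (s (other v))) => [Hlt|Hgt|Heq].
- have [q [Hq Hlq Hlet Hdq]] := pick_below W'_rich Hr (below Hlt) Hi.
  exists q => //; apply: (strategy_inv_upd HI Hi Hq) => [|_|]; first by rewrite Hlet.
  + by apply: same_order_lt => //; exact: homo_leq_lt lv'_homo Hlq.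
  + by rewrite /status Hd Hdq orbT.
- have [q [Hq Hlq Hlet Hdq]] := pick_above W'_rich Hr (above Hgt) Hi.
  exists q => //; apply: (strategy_inv_upd HI Hi Hq) => [|_|]; first by rewrite Hlet.
  + by apply/same_order_sym/same_order_lt => //; exact: homo_leq_lt lv'_homo Hlq.
  + by rewrite /status Hd Hdq orbT.
- exists (s' (other v)) => //; apply: (strategy_inv_upd HI Hi Ha'); rewrite ?Heq //.
  + by move=> _; exact: same_order_diag.
  + by apply: statusS; apply: St.
Qed.

Lemma back r s s' P v i' : r < n -> strategy_inv r.+1 s s' P -> i' < size W' ->
  exists2 i, i < size W & strategy_inv r (upd s v i) (upd s' v i') (extend P v).
Proof.
move=> Hr HI Hi'; have [[A1 _] St] := HI.
have [Hp Hpc Hpp] := psi_spec Hi'.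
have [_ Hlp Hletp] := phi_spec Hp Hpc; rewrite Hpp in Hlp Hletp.
have [Ho|Hno] := boolP (P (other v) ==> same_order (psi i') (s (other v)) i' (s' (other v))).
  exists (psi i') => //; apply: (strategy_inv_upd HI Hp Hi') => [||]; first by rewrite Hletp.
  - exact/implyP.
  - by rewrite /status Hpc Hpp eqxx.
move: Hno; case Po: (P (other v)) => //= Hno.
have [Ha Ha' Hla] := A1 _ Po.
have /andP[Da Da'] : (distn (lv (s (other v))) c <= n - r.+1) &&
                     (distn (lv' (s' (other v))) c <= n - r.+1).
  move: (St _ Po) => /orP[/andP[Hca /eqP Ea]|//].
  by move: Hno; rewrite Ea -{2}Hpp phi_same_order.
have Hd : distn (lv' i') c <= n - r.
  rewrite leqNgt Hlp; apply/negP => Hfar.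
  by move/negP: Hno; apply; exact: far_same_order Da Da' (esym Hlp) Hfar.
case: (ltngtP i' (s' (other v))) => [Hlt|Hgt|Heq].
- have [q [Hq Hlq Hlet Hdq]] :=
    pick_below W_rich Hr (j := lv (s (other v))) ltac:(rewrite /distn in Da; lia) Hp.
  exists q => //; apply: (strategy_inv_upd HI Hq Hi') => [|_|]; first by rewrite Hlet Hletp.
  + by apply: same_order_lt => //; exact: homo_leq_lt lv_homo Hlq.
  + by rewrite /status Hd Hdq orbT.
- have [q [Hq Hlq Hlet Hdq]] :=
    pick_above W_rich Hr (j := lv (s (other v))) ltac:(rewrite /distn in Da; lia) Hp.
  exists q => //; apply: (strategy_inv_upd HI Hq Hi') => [|_|]; first by rewrite Hlet Hletp.
  + by apply/same_order_sym/same_order_lt => //; exact: homo_leq_lt lv_homo Hlq.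
  + by rewrite /status Hd Hdq orbT.
- exists (s (other v)) => //; apply: (strategy_inv_upd HI Ha Hi'); rewrite ?Heq //.
  + by move=> _; exact: same_order_diag.
  + by apply: statusS; apply: St.
Qed.

Lemma strategy_inv_ef_equiv r s s' P :
  r <= n -> strategy_inv r s s' P -> ef_equiv r W W' s s' P.
Proof.
elim: r s s' P => [|r IH] s s' P Hr HI; split; try by case: HI.
move=> v; split=> [i Hi|i' Hi'].
- by have [i' Hi' HI'] := forth v Hr HI Hi; exists i' => //; apply: IH (ltnW Hr) HI'.
- by have [i Hi HI'] := back v Hr HI Hi'; exists i => //; apply: IH (ltnW Hr) HI'.
Qed.

Lemma levelled_deletion : ef_equiv0 n W W'.
Proof. exact: strategy_inv_ef_equiv. Qed.

End LevelledDeletion.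

Section BlockIndex.
Variable k : nat.

Fixpoint block_index (L : seq (seq 'I_k)) (p : nat) : nat :=
  if L is b :: L' then
    if p < size b then 0 else (block_index L' (p - size b)).+1
  else 0.

Lemma block_index_homo L : {homo block_index L : p q / p <= q}.
Proof.
elim: L => [|b L IH] p q Hpq //=.
case: (ltnP q (size b)) => Hq; first by rewrite (leq_ltn_trans Hpq Hq).
case: (ltnP p (size b)) => Hp //.
by rewrite ltnS; apply: IH; apply: leq_sub2r.
Qed.

Lemma block_index_lt L p : p < size (flatten L) -> block_index L p < size L.
Proof.
elim: L p => [|b L IH] p //=; rewrite size_cat => Hp.
by case: (ltnP p (size b)) => Hb //; rewrite ltnS; apply: IH; lia.
Qed.

Lemma block_index_exists L t (a : 'I_k) : t < size L -> a \in nth [::] L t ->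
  exists p, [/\ p < size (flatten L), block_index L p = t & letter (flatten L) p = Some a].
Proof.
elim: L t => [|b L IH] [|t] //= Ht Ha.
- have Hi : index a b < size b by rewrite index_mem.
  exists (index a b); rewrite size_cat ltn_addr // Hi letter_cat Hi.
  by rewrite /letter (nth_map a) // nth_index.
- have [p [Hp Hidx Hlet]] := IH t Ht Ha.
  exists (size b + p); rewrite size_cat ltn_add2l letter_catr Hlet.
  by split=> //; rewrite ltnNge leq_addr /= addKn Hidx.
Qed.

End BlockIndex.

Section DeleteMiddle.
Variables (k n : nat) (EL ER : seq (seq 'I_k)) (z : seq 'I_k).
Hypothesis size_EL : size EL = n.
Hypothesis size_ER : size ER = n.
Local Notation L := (flatten EL).
Local Notation R := (flatten ER).
Hypothesis blocks_full : forall b, b \in EL ++ ER -> {subset L ++ z ++ R <= b}.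

(* The blocks of [EL] get levels [0, ..., n-1], the middle part [z] level [n]
   and the blocks of [ER] levels [n+1, ...]; deleting [z] preserves all other
   levels. *)
Definition long_level p :=
  if p < size L then block_index EL p
  else if p < size L + size z then n
  else n.+1 + block_index ER (p - size L - size z).
Definition short_level p :=
  if p < size L then block_index EL p else n.+1 + block_index ER (p - size L).
Definition delete_pos p := if p < size L then p else p - size z.
Definition insert_pos p := if p < size L then p else p + size z.

Let EL_index_lt p : p < size L -> block_index EL p < n.
Proof. by rewrite -size_EL; apply: block_index_lt. Qed.

Let long_level_homo : {homo long_level : p q / p <= q}.
Proof.
move=> p q Hpq; rewrite /long_level.
case: (ltnP q (size L)) => Hq.
  by rewrite (leq_ltn_trans Hpq Hq); apply: block_index_homo.
case: (ltnP p (size L)) => Hp; first by have := EL_index_lt Hp; case: ifP => _; lia.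
case: (ltnP q (size L + size z)) => Hq2; first by rewrite (leq_ltn_trans Hpq Hq2).
case: (ltnP p (size L + size z)) => Hp2; first by lia.
by rewrite leq_add2l; apply: block_index_homo; lia.
Qed.

Let short_level_homo : {homo short_level : p q / p <= q}.
Proof.
move=> p q Hpq; rewrite /short_level.
case: (ltnP q (size L)) => Hq.
  by rewrite (leq_ltn_trans Hpq Hq); apply: block_index_homo.
case: (ltnP p (size L)) => Hp; first by have := EL_index_lt Hp; lia.
by rewrite leq_add2l; apply: block_index_homo; lia.
Qed.

Local Notation W := (L ++ z ++ R).
Local Notation W' := (L ++ R).

Let long_pos_cases p : p < size W ->
  [\/ p < size L, size L <= p < size L + size z | exists2 q, q < size R & p = size L + size z + q].
Proof.
rewrite !size_cat => Hp; case: (ltnP p (size L)) => H1; first by constructor 1.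
case: (ltnP p (size L + size z)) => H2; first by constructor 2.
by constructor 3; exists (p - size L - size z); lia.
Qed.

Let short_pos_cases p : p < size W' -> p < size L \/ exists2 q, q < size R & p = size L + q.
Proof.
rewrite size_cat => Hp; case: (ltnP p (size L)) => H1; [by left | right].
by exists (p - size L); lia.
Qed.

Let long_level_R q : long_level (size L + size z + q) = n.+1 + block_index ER q.
Proof. by rewrite /long_level ifF ?ifF; do ?f_equal; lia. Qed.

Let short_level_R q : short_level (size L + q) = n.+1 + block_index ER q.
Proof. by rewrite /short_level ifF; do ?f_equal; lia. Qed.

Let letter_long_R q : letter W (size L + size z + q) = letter R q.
Proof. by rewrite catA -size_cat letter_catr. Qed.

Let letter_short_R q : letter W' (size L + q) = letter R q.
Proof. exact: letter_catr. Qed.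

Let letter_L V p : p < size L -> letter (L ++ V) p = letter L p.
Proof. by rewrite letter_cat => ->. Qed.

Let delete_pos_spec p : p < size W -> long_level p != n ->
  [/\ delete_pos p < size W', short_level (delete_pos p) = long_level p
    & letter W' (delete_pos p) = letter W p].
Proof.
case/long_pos_cases => [Hp|/andP[H1 H2]|[q Hq ->]].
- by rewrite /delete_pos /long_level /short_level !Hp !letter_L // size_cat ltn_addr.
- by rewrite /long_level ifF ?H2 ?eqxx //; lia.
- have -> : delete_pos (size L + size z + q) = size L + q by rewrite /delete_pos ifF; lia.
  by rewrite long_level_R short_level_R letter_long_R letter_short_R size_cat ltn_add2l.
Qed.

Let delete_pos_mono p q : p < q -> q < size W -> long_level p != n -> long_level q != n ->
  delete_pos p < delete_pos q.
Proof. by rewrite /delete_pos /long_level; do ![case: ifP]; lia. Qed.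

Let insert_pos_spec p' : p' < size W' ->
  [/\ insert_pos p' < size W, long_level (insert_pos p') != n
    & delete_pos (insert_pos p') = p'].
Proof.
case/short_pos_cases => [Hp|[q Hq ->]].
- rewrite /insert_pos /delete_pos /long_level !Hp; split=> //; last by have := EL_index_lt Hp; lia.
  by rewrite size_cat ltn_addr.
- have -> : insert_pos (size L + q) = size L + size z + q by rewrite /insert_pos ifF; lia.
  rewrite long_level_R !size_cat; split; [lia | lia |].
  by rewrite /delete_pos ifF; lia.
Qed.

Let full_block_witness (EB : seq (seq 'I_k)) t p (HEB : {subset EB <= EL ++ ER}) :
  t < size EB -> p < size W ->
  exists q, [/\ q < size (flatten EB), block_index EB q = t
              & letter (flatten EB) q = letter W p].
Proof.
move=> Ht /letter_some [a Ha ->].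
exact: block_index_exists Ht (blocks_full (HEB _ (mem_nth [::] Ht)) Ha).
Qed.

Let long_word_rich : rich n n W W long_level.
Proof.
move=> t p /eqP Htn Htd Hp; case: (ltnP t n) => Ht.
- have [q [Hq Hlq Hlet]] :=
    full_block_witness (mem_subseq (prefix_subseq EL ER)) (t := t) ltac:(by rewrite size_EL) Hp.
  by exists q; rewrite /long_level letter_L // size_cat ltn_addr // Hq.
- have [q [Hq Hlq Hlet]] := full_block_witness (mem_subseq (suffix_subseq EL ER))
    (t := t - n.+1) ltac:(rewrite size_ER /distn in Htd *; lia) Hp.
  exists (size L + size z + q); rewrite long_level_R letter_long_R Hlq Hlet !size_cat.
  by split=> //; lia.
Qed.

Let short_word_rich : rich n n W W' short_level.
Proof.
move=> t p /eqP Htn Htd Hp; case: (ltnP t n) => Ht.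
- have [q [Hq Hlq Hlet]] :=
    full_block_witness (mem_subseq (prefix_subseq EL ER)) (t := t) ltac:(by rewrite size_EL) Hp.
  by exists q; rewrite /short_level letter_L // size_cat ltn_addr // Hq.
- have [q [Hq Hlq Hlet]] := full_block_witness (mem_subseq (suffix_subseq EL ER))
    (t := t - n.+1) ltac:(rewrite size_ER /distn in Htd *; lia) Hp.
  exists (size L + q); rewrite short_level_R letter_short_R Hlq Hlet !size_cat.
  by split=> //; lia.
Qed.

Lemma ef_equiv0_delete_middle : ef_equiv0 n (L ++ z ++ R) (L ++ R).
Proof.
exact: (levelled_deletion (leqnn n) long_level_homo short_level_homo delete_pos_spec
  delete_pos_mono insert_pos_spec long_word_rich short_word_rich).
Qed.

End DeleteMiddle.

Section SmallModel.
Variable k : nat.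
Implicit Types (w u : seq 'I_k) (bs : seq (seq 'I_k)).

Lemma card_lt_subset u w : {subset u <= w} -> ~~ (w \subset u) -> #|u| < #|w|.
Proof. by move=> /subsetP Huw Hwu; apply: proper_card; rewrite properE Huw. Qed.

Lemma full_blocks_rec (B : seq 'I_k) : B != [::] -> forall w u, ~~ (B \subset u) ->
  exists bs r, [/\ u ++ w = flatten bs ++ r,
    {in bs, forall b, B \subset b /\
       exists u' a, [/\ b = rcons u' a, ~~ (B \subset u') & {subset u' <= u ++ w}]},
    ~~ (B \subset r) & {subset r <= u ++ w}].
Proof.
move=> HB; have H0 : ~~ (B \subset [::]).
  by case: B HB => // x B _; apply/subsetPn; exists x; rewrite ?mem_head.
elim=> [|a w IH] u Hu.
  by exists [::], u; rewrite cats0; split.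
case: (boolP (B \subset rcons u a)) => Hf; last first.
  by have [bs [r [E Hbs Hr Hrw]]] := IH _ Hf; exists bs, r; rewrite -cat_rcons.
have [bs [r [/= E Hbs Hr Hrw]]] := IH [::] H0.
have mem_tail (x : 'I_k) : x \in w -> x \in u ++ a :: w.
  by rewrite mem_cat in_cons => ->; rewrite !orbT.
exists (rcons u a :: bs), r; split=> //.
- by rewrite -cat_rcons /= E catA.
- move=> b; rewrite in_cons => /orP[/eqP ->|/Hbs [Hfb [u' [a' [Eb Hu' Hu'w]]]]].
    by split=> //; exists u, a; split=> // x Hx; rewrite mem_cat Hx.
  by split=> //; exists u', a'; split=> // x /Hu'w /mem_tail.
- by move=> x /Hrw /mem_tail.
Qed.

Lemma full_blocks w : w != [::] ->
  exists bs r, [/\ w = flatten bs ++ r,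
    {in bs, forall b, w \subset b /\ exists u a, b = rcons u a /\ #|u| < #|w|} & #|r| < #|w|].
Proof.
move=> Hw; have H0 : ~~ (w \subset [::]).
  by case: w Hw => // x w _; apply/subsetPn; exists x; rewrite ?mem_head.
have [bs [r [E Hbs Hr Hrw]]] := full_blocks_rec Hw w H0.
exists bs, r; split=> //; last exact: card_lt_subset.
move=> b /Hbs [Hb [u [a [Eb Hu Huw]]]]; split=> //.
by exists u, a; split=> //; apply: card_lt_subset.
Qed.

Lemma ef_equiv0_few_blocks n bs r : {in bs, forall b, flatten bs ++ r \subset b} ->
  exists bs', [/\ size bs' <= n + n, {subset bs' <= bs}
                & ef_equiv0 n (flatten bs ++ r) (flatten bs' ++ r)].
Proof.
move=> Hfull; case: (leqP (size bs) (n + n)) => Hm.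
  by exists bs; split=> //; exact: ef_equiv0_refl.
have Hsplit : flatten bs = flatten (take n bs) ++
    flatten (drop n (take (size bs - n) bs)) ++ flatten (drop (size bs - n) bs).
  rewrite -(@take_takel _ n (size bs - n)) ?catA -?flatten_cat ?cat_take_drop //; lia.
have Hsub : {subset take n bs ++ drop (size bs - n) bs <= bs}.
  by move=> b; rewrite mem_cat => /orP[/mem_take|/mem_drop].
exists (take n bs ++ drop (size bs - n) bs); split=> //.
  by rewrite size_cat size_takel ?size_drop; lia.
rewrite {1}Hsplit flatten_cat; apply: ef_equiv0_cat (ef_equiv0_refl _ _).
apply: ef_equiv0_delete_middle; rewrite ?size_takel ?size_drop; try lia.
move=> b /Hsub /Hfull /subsetP Hb x Hx; apply: Hb.
by rewrite mem_cat Hsplit; apply/orP; left.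
Qed.

Lemma size_bound_step C N n b x y : 0 < n -> 0 < N -> b <= n + n ->
  x <= b * (C * N + 1) -> y <= C * N -> x + y <= 3 * (C + 1) * (n * N).
Proof. by move=> Hn HN Hb; have := leq_mul Hb (leqnn (C * N + 1)); nia. Qed.

Fixpoint size_bound j := if j is j'.+1 then 3 * (size_bound j' + 1) else 0.

Lemma ef_equiv0_flatten n j bs :
  (forall u, #|u| <= j -> exists u', size u' <= size_bound j * n ^ j /\ ef_equiv0 n u u') ->
  {in bs, forall b, exists u a, b = rcons u a /\ #|u| <= j} ->
  exists w', size w' <= size bs * (size_bound j * n ^ j + 1) /\ ef_equiv0 n (flatten bs) w'.
Proof.
move=> IH; elim: bs => [|b bs IHbs] Hbs.
  by exists [::]; split=> //; exact: ef_equiv0_refl.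
have [u [a [-> Hu]]] := Hbs b (mem_head _ _).
have [w2 [Hs2 G2]] := IHbs (fun b' Hb' => Hbs b' (mem_behead (s := b :: bs) Hb')).
have [u' [Hsu Gu]] := IH u Hu.
exists (u' ++ [:: a] ++ w2); split.
  by rewrite !size_cat /= mulSn; lia.
rewrite /= -cats1 -catA; apply: ef_equiv0_cat Gu _.
exact: ef_equiv0_cat (ef_equiv0_refl _ _) G2.
Qed.

Lemma short_ef_equiv0 j n : 0 < n -> forall w, #|w| <= j ->
  exists w', size w' <= size_bound j * n ^ j /\ ef_equiv0 n w w'.
Proof.
move=> Hn; elim: j => [|j IHj] w Hw.
  have -> : w = [::].
    by case: w Hw => // a w; rewrite leqn0 => /eqP/card0_eq/(_ a); rewrite mem_head.
  by exists [::]; split=> //; exact: ef_equiv0_refl.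
have [->|Hne] := eqVneq w [::]; first by exists [::]; split=> //; exact: ef_equiv0_refl.
have [bs [r [Ew Hbs Hr]]] := full_blocks Hne; rewrite {}Ew in Hw Hbs Hr *.
have Hblocks : {in bs, forall b, exists u a, b = rcons u a /\ #|u| <= j}.
  by move=> b /Hbs [_ [u [a [Eb Hu]]]]; exists u, a; split=> //; lia.
have [bs' [Hsize Hsub G1]] := ef_equiv0_few_blocks n (fun b Hb => (Hbs b Hb).1).
have [w2 [Hs2 G2]] := ef_equiv0_flatten IHj (fun b Hb => Hblocks b (Hsub b Hb)).
have [r' [Hsr Gr]] := IHj r ltac:(lia).
exists (w2 ++ r'); split; last exact: ef_equiv0_trans G1 (ef_equiv0_cat G2 Gr).
rewrite size_cat expnS /=; apply: size_bound_step Hsize Hs2 Hsr => //.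
by rewrite expn_gt0 Hn.
Qed.

End SmallModel.

Theorem theorem6p2 :
  forall k : nat, 1 <= k ->
  exists c : nat, forall n : nat, 1 <= n ->
    forall phi : fo2 k, sentence phi -> qdepth phi <= n ->
      (exists w : seq 'I_k, models w phi) ->
      exists w : seq 'I_k, size w <= c * n ^ k /\ models w phi.
Proof.
move=> k _; exists (size_bound k) => n Hn phi [HX HY] Hd [w Hw].
have Hk : #|w| <= k by rewrite -[k in _ <= k]card_ord max_card.
have [w' [Hsize G]] := short_ef_equiv0 Hn Hk.
exists w'; split=> //.
rewrite /models -(ef_equiv_holds Hd _ G) // => -[] Hfree.
- by rewrite Hfree in HX.
- by rewrite Hfree in HY.
Qed.
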